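(* There is an absolute constant $\alpha$ such that for every rule $\mathcal{R}$, every finite $X\subseteq\mathbb{R}^d$, all $k\ge2,\ell\ge1$, and every optimal cluster $K$, when general $k$-means++ with rule $\mathcal{R}$ is run on $X$ with parameters $k,\ell$, we have $\mathbb{E}[\mathrm{HIT}(K)]\le\alpha\,\ell\,k^{1-1/\ell}$.
   Context: $\phi(x,C)=\min_{c\in C}\|x-c\|_2^2$ ($\phi(x,\emptyset)=\infty$), $\phi(Y,C)=\sum_{x\in Y}\phi(x,C)$. A rule $\mathcal{R}$ selects one of $\ell$ given candidate points (given access to $X$, current centers, $k$, $\ell$). General $k$-means++ with rule $\mathcal{R}$: $C_0=\emptyset$; sample $c_1^1,\dots,c_1^\ell$ independently uniformly from $X$, $\mathcal{R}$ selects $c_1$ among them, $C_1=\{c_1\}$; for $i=1,\dots,k-1$ sample $c_{i+1}^1,\dots,c_{i+1}^\ell\in X$ independently with $\Pr[c_{i+1}^j=x]=\phi(x,C_i)/\phi(X,C_i)$, $\mathcal{R}$ selects $c_{i+1}$ among them, $C_{i+1}=C_i\cup\{c_{i+1}\}$. An optimal cluster $K$ is the set of points of $X$ whose closest center in a fixed optimal $k$-means solution is a given center; $\mu(K)$ is its centroid and $\phi^*(K)=\phi(K,\{\mu(K)\})$. $K$ is covered w.r.t. $C$ if $K\cap C\neq\emptyset$, solved w.r.t. $C$ if $\phi(K,C)\le10^5\phi^*(K)$. $\mathrm{HIT}(K)=\sum_{i=0}^{k-1}\sum_{j=1}^\ell \mathbf{1}[c_{i+1}^j\in K$ and $K$ is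 neither covered nor solved w.r.t. $C_i]$. *)

From HB Require Import structures.
From mathcomp Require Import all_boot all_order all_algebra.
From mathcomp Require Import all_classical all_reals all_analysis.
From mathcomp Require Import Rstruct.

Set Implicit Arguments.
Unset Strict Implicit.
Unset Printing Implicit Defensive.

Import Order.TTheory GRing.Theory Num.Theory.
Local Open Scope ring_scope.

Section KMeansPP.
Context {R : realType}.

Definition sqdist (d : nat) (x y : 'rV[R]_d) : R :=
  \sum_(i < d) (x ord0 i - y ord0 i) ^+ 2.

Definition phi (d : nat) (x : 'rV[R]_d) (C : seq 'rV[R]_d) : \bar R :=
  \big[Order.min/+oo%E]_(c <- C) (sqdist x c)%:E.

(* The finite point set X = { p i | i < n }, p injective. *)
Variables (d n : nat) (p : 'I_n -> 'rV[R]_d).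

Definition phiC (x : 'I_n) (C : {set 'I_n}) : \bar R :=
  phi (p x) [seq p c | c <- enum C].

Definition phiS (A : {set 'I_n}) (C : {set 'I_n}) : \bar R :=
  (\sum_(x in A) phiC x C)%E.

Definition centroid (A : {set 'I_n}) : 'rV[R]_d :=
  (#|A|%:R)^-1 *: \sum_(x in A) p x.

Definition phistar (A : {set 'I_n}) : R :=
  \sum_(x in A) sqdist (p x) (centroid A).

Definition covered (A C : {set 'I_n}) : bool := A :&: C != finset.set0.

Definition solved (A C : {set 'I_n}) : bool :=
  (phiS A C <= ((10 ^+ 5) * phistar A)%:E)%E.

(* Sampling probability of x given current centers C:
   uniform if C is empty; D^2-sampling phi(x,C)/phi(X,C) otherwise.
   (If phi(X,C) = 0, i.e. every point is already a center, the paper's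
   distribution is undefined; we fall back to uniform. All clusters are then
   covered, so this convention does not affect HIT.) *)
Definition weight (C : {set 'I_n}) (x : 'I_n) : R :=
  if C == finset.set0 then n%:R^-1
  else let tot := fine (phiS [set: 'I_n] C) in
       if tot == 0 then n%:R^-1 else fine (phiC x C) / tot.

Variable (k l : nat).

(* A rule: given (X, k, l fixed and) the current centers and the l candidates,
   selects one of the candidates (by its position j < l). *)
Definition rule_t := {set 'I_n} -> {ffun 'I_l -> 'I_n} -> 'I_l.

Variables (rule : rule_t) (K : {set 'I_n}).

Definition tupleprob (C : {set 'I_n}) (t : {ffun 'I_l -> 'I_n}) : R :=
  \prod_(j < l) weight C (t j).

(* contribution of one round to HIT(K) *)
Definition hits (C : {set 'I_n}) (t : {ffun 'I_l -> 'I_n}) : nat :=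
  if ~~ covered K C && ~~ solved K C then #|[set j | t j \in K]| else 0.

(* EHIT m C = expected contribution to HIT(K) of the remaining m rounds when
   the current set of centers is C. *)
Fixpoint EHIT (m : nat) (C : {set 'I_n}) : R :=
  match m with
  | 0 => 0
  | m'.+1 => \sum_(t : {ffun 'I_l -> 'I_n})
       tupleprob C t * ((hits C t)%:R + EHIT m' (C :|: [set t (rule C t)]))
  end.

Definition expected_HIT : R := EHIT k finset.set0.

End KMeansPP.

Section Optimal.
Context {R : realType}.
Variables (d n k : nat) (p : 'I_n -> 'rV[R]_d).

Definition centers (c : 'I_k -> 'rV[R]_d) : seq 'rV[R]_d := [seq c j | j <- enum 'I_k].

Definition kmeans_cost (c : 'I_k -> 'rV[R]_d) : \bar R :=
  (\sum_(x < n) phi (p x) (centers c))%E.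

Definition is_optimal (c : 'I_k -> 'rV[R]_d) : Prop :=
  forall c' : 'I_k -> 'rV[R]_d, (kmeans_cost c <= kmeans_cost c')%E.

Definition closest_assignment (c : 'I_k -> 'rV[R]_d) (a : 'I_n -> 'I_k) : Prop :=
  forall x, (sqdist (p x) (c (a x)))%:E = phi (p x) (centers c).

Definition opt_cluster (a : 'I_n -> 'I_k) (j : 'I_k) : {set 'I_n} :=
  [set x | a x == j].

End Optimal.

(* A potential argument, valid for every set K. Let w be the sampling weights
   of a round and q = w(K). While K is uncovered, the l candidates hit K
   l q times in expectation, and with probability at least q^l they all lie
   in K, so that K becomes covered. For the potential
   Phi = l B [K uncovered] with B = k^(1-1/l), the expected hits of a round
   plus the expected value of Phi afterwards are thus at most
   Phi + l (q - B q^l) <= Phi + l B / k, since B^l = k^(l-1) gives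
   q <= B / k + B q^l. Summing over the k rounds,
   E[HIT(K)] <= k l B / k + l B = 2 l k^(1-1/l). *)

From mathcomp Require Import all_boot all_order all_algebra.
From mathcomp Require Import all_classical all_reals all_analysis.
From mathcomp Require Import Rstruct.
From mathcomp Require Import ring lra.
Set Implicit Arguments.
Unset Strict Implicit.
Unset Printing Implicit Defensive.

Import Order.TTheory GRing.Theory Num.Theory.
Local Open Scope ring_scope.

Lemma sqdist_ge0 {R : realType} (d : nat) (x y : 'rV[R]_d) : 0 <= sqdist x y.
Proof. by apply: sumr_ge0 => i _; apply: sqr_ge0. Qed.

Lemma phi_ge0 {R : realType} (d : nat) (x : 'rV[R]_d) (s : seq 'rV[R]_d) :
  (0 <= phi x s)%E.
Proof. by apply: le_bigmin => [|c _]; rewrite ?leey ?lee_fin ?sqdist_ge0. Qed.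

Lemma phi_le_sqdist {R : realType} (d : nat) (x c : 'rV[R]_d) (s : seq 'rV[R]_d) :
  c \in s -> (phi x s <= (sqdist x c)%:E)%E.
Proof. by move=> cs; apply: (ge_bigmin_seq _ c xpredT _ cs). Qed.

Lemma phi_fin_num {R : realType} (d : nat) (x c : 'rV[R]_d) (s : seq 'rV[R]_d) :
  c \in s -> phi x s \is a fin_num.
Proof.
move=> cs; rewrite ge0_fin_numE ?phi_ge0 //.
by rewrite (le_lt_trans (phi_le_sqdist x cs)) ?ltry.
Qed.

Section Weights.
Context {R : realType} {d n : nat} (p : 'I_n -> 'rV[R]_d).

Lemma phiC_fin_num (x : 'I_n) (C : {set 'I_n}) :
  C != finset.set0 -> phiC p x C \is a fin_num.
Proof.
case/finset.set0Pn => c cC; apply: (@phi_fin_num _ _ _ (p c)).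
by apply: map_f; rewrite mem_enum.
Qed.

Lemma weight_ge0 (C : {set 'I_n}) (x : 'I_n) : 0 <= weight p C x.
Proof.
rewrite /weight; case: ifP => _; first by rewrite invr_ge0 ler0n.
case: ifP => _; first by rewrite invr_ge0 ler0n.
by rewrite divr_ge0 // fine_ge0 ?phi_ge0 // sume_ge0 // => y _; apply: phi_ge0.
Qed.

Lemma sum_weight_le1 (C : {set 'I_n}) : \sum_x weight p C x <= 1.
Proof.
have uniform : \sum_(x : 'I_n) (n%:R : R)^-1 <= 1.
  rewrite sumr_const card_ord -(mulr_natr (n%:R)^-1).
  have [->|n0] := eqVneq (n%:R : R) 0; first by rewrite invr0 mul0r ler01.
  by rewrite mulVf.
rewrite /weight; case: eqP => [_|/eqP C0] /=; first exact: uniform.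
case: eqP => [_|/eqP tot0]; first exact: uniform.
have tot : \sum_x fine (phiC p x C) = fine (phiS p [set: 'I_n] C).
  rewrite /phiS -sum_fine => [|y _]; last exact: phiC_fin_num.
  by apply: eq_bigl => y; rewrite finset.in_setT.
by rewrite -mulr_suml tot mulfV.
Qed.

End Weights.

Section CandidateTuples.
Context {R : numDomainType} {T : finType} (l : nat) (w : T -> R) (A : {set T}).

Lemma sum_mul_indicator : \sum_x w x * (x \in A)%:R = \sum_(x in A) w x.
Proof.
by rewrite [RHS]big_mkcond; apply: eq_bigr => x _; case: (x \in A); rewrite ?mulr1 ?mulr0.
Qed.

Lemma sum_ffun_prod : \sum_(t : {ffun 'I_l -> T}) \prod_j w (t j) = (\sum_x w x) ^+ l.
Proof. by rewrite -(bigA_distr_bigA (fun _ => w)) prodr_const card_ord. Qed.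

Lemma sum_ffun_prod_all_in :
  \sum_(t : {ffun 'I_l -> T}) \prod_j w (t j) * [forall j, t j \in A]%:R
    = (\sum_(x in A) w x) ^+ l.
Proof.
have allE (t : {ffun 'I_l -> T}) :
    [forall j, t j \in A]%:R = \prod_j (t j \in A)%:R :> R.
  case: (boolP [forall j, t j \in A]) => [/forallP tA | /forallPn [j tj]].
    by rewrite big1 // => j _; rewrite tA.
  by rewrite (bigD1 j) //= (negbTE tj) mul0r.
under eq_bigr do rewrite allE -big_split.
rewrite -(bigA_distr_bigA (fun _ x => w x * (x \in A)%:R)).
by rewrite prodr_const card_ord sum_mul_indicator.
Qed.

Lemma sum_ffun_prod_card :
  \sum_(t : {ffun 'I_l -> T}) \prod_j w (t j) * #|[set j | t j \in A]|%:R
    = l%:R * (\sum_(x in A) w x) * (\sum_x w x) ^+ l.-1.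
Proof.
have cardE (t : {ffun 'I_l -> T}) :
    #|[set j | t j \in A]|%:R = \sum_j (t j \in A)%:R :> R.
  rewrite -sum1_card natr_sum big_mkcond; apply: eq_bigr => j _.
  by rewrite finset.inE; case: (t j \in A).
under eq_bigr do rewrite cardE mulr_sumr.
rewrite exchange_big -mulrA mulr_natl.
transitivity (\sum_(j < l) ((\sum_(x in A) w x) * (\sum_x w x) ^+ l.-1));
  last by rewrite sumr_const card_ord.
apply: eq_bigr => j _.
have splitE (t : {ffun 'I_l -> T}) : \prod_i w (t i) * (t j \in A)%:R
    = \prod_i (w (t i) * (if i == j then (t i \in A)%:R else 1)).
  rewrite big_split /=; congr (_ * _).
  by rewrite (bigD1 j) //= eqxx big1 ?mulr1 // => i /negbTE ->.
under eq_bigr do rewrite splitE.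
rewrite -(bigA_distr_bigA (fun i x => w x * (if i == j then (x \in A)%:R else 1))).
rewrite (bigD1 j) //= eqxx sum_mul_indicator; congr (_ * _).
under eq_bigr => i /negbTE ij do under eq_bigr do rewrite ij mulr1.
by rewrite prodr_const cardC1 card_ord.
Qed.

End CandidateTuples.

Lemma coveredU {n : nat} (A C D : {set 'I_n}) :
  covered A (C :|: D) = covered A C || covered A D.
Proof. by rewrite /covered finset.setIUr finset.setU_eq0 negb_and. Qed.

Section HitPotential.
Context {R : realType} {d n : nat} (p : 'I_n -> 'rV[R]_d).
Context {l : nat} (rule : rule_t n l) (K : {set 'I_n}).

Local Notation candidates := {ffun 'I_l -> 'I_n}.

Lemma tupleprob_ge0 (C : {set 'I_n}) (t : candidates) : 0 <= tupleprob p C t.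
Proof. by apply: prodr_ge0 => j _; apply: weight_ge0. Qed.

Lemma sum_tupleprob_le1 (C : {set 'I_n}) :
  \sum_(t : candidates) tupleprob p C t <= 1.
Proof.
rewrite /tupleprob sum_ffun_prod exprn_ile1 ?sum_weight_le1 //.
by apply: sumr_ge0 => x _; apply: weight_ge0.
Qed.

Lemma hits_le_card C (t : candidates) :
  (hits p K C t <= ~~ covered K C * #|[set j | t j \in K]|)%N.
Proof.
by rewrite /hits; case: (covered K C); case: (solved p K C); rewrite ?mul1n.
Qed.

Lemma uncovered_after_round C (t : candidates) (i : 'I_l) :
  (~~ covered K (C :|: [set t i]))%:R
    <= (~~ covered K C)%:R * (1 - [forall j, t j \in K]%:R) :> R.
Proof.
rewrite coveredU; case: (boolP [forall j, t j \in K]) => [/forallP tK | _].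
  have -> : covered K [set t i].
    by apply/finset.set0Pn; exists (t i); rewrite finset.inE tK finset.set11.
  by rewrite orbT subrr mulr0.
by rewrite subr0 mulr1 ler_nat; case: (covered K C); case: (covered K _).
Qed.

Variables (e B : R).
Hypotheses (e_ge0 : 0 <= e) (B_ge0 : 0 <= B).
Hypothesis bound_by_power : forall x : R, 0 <= x -> x <= e + B * x ^+ l.

Lemma expected_round_potential C :
  \sum_(t : candidates) tupleprob p C t * ((hits p K C t)%:R
      + l%:R * B * (~~ covered K (C :|: [set t (rule C t)]))%:R)
    <= l%:R * e + l%:R * B * (~~ covered K C)%:R.
Proof.
set u : R := (~~ covered K C)%:R.
set q := \sum_(x in K) weight p C x.
set cnt := fun t : candidates => #|[set j | t j \in K]|%:R : R.
set all := fun t : candidates => [forall j, t j \in K]%:R : R.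
have q_ge0 : 0 <= q by apply: sumr_ge0 => x _; apply: weight_ge0.
have S_ge0 : 0 <= \sum_x weight p C x by apply: sumr_ge0 => x _; apply: weight_ge0.
have Ecnt : \sum_(t : candidates) tupleprob p C t * cnt t <= l%:R * q.
  rewrite /tupleprob sum_ffun_prod_card -[leRHS]mulr1.
  by apply: ler_wpM2l; rewrite ?mulr_ge0 // exprn_ile1 ?sum_weight_le1.
have Eall : \sum_(t : candidates) tupleprob p C t * all t = q ^+ l.
  exact: sum_ffun_prod_all_in.
apply: le_trans (_ : \sum_(t : candidates) tupleprob p C t
    * (u * cnt t + l%:R * B * u * (1 - all t)) <= _).
  apply: ler_sum => t _; apply: ler_wpM2l; first exact: tupleprob_ge0.
  apply: lerD; first by rewrite -natrM ler_nat hits_le_card.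
  rewrite -[in leRHS]mulrA; apply: ler_wpM2l; first by rewrite mulr_ge0.
  exact: uncovered_after_round.
have -> : \sum_(t : candidates) tupleprob p C t
      * (u * cnt t + l%:R * B * u * (1 - all t))
    = u * \sum_(t : candidates) tupleprob p C t * cnt t
      + l%:R * B * u * (\sum_(t : candidates) tupleprob p C t
                        - \sum_(t : candidates) tupleprob p C t * all t).
  rewrite !mulr_sumr -sumrB mulr_sumr -big_split /=.
  by apply: eq_bigr => t _; ring.
have ES := sum_tupleprob_le1 C.
have key : l%:R * q <= l%:R * (e + B * q ^+ l).
  by apply: ler_wpM2l; rewrite ?bound_by_power.
have ES_scaled : l%:R * B * \sum_(t : candidates) tupleprob p C t <= l%:R * B.
  by rewrite -[leRHS]mulr1; apply: ler_wpM2l; rewrite ?mulr_ge0.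
have le_ge0 : 0 <= l%:R * e by rewrite mulr_ge0.
rewrite Eall /u; case: (covered K C) => /=; rewrite ?(mulr0, mul0r, mulr1); lra.
Qed.

Lemma EHIT_le_potential m C :
  EHIT p rule K m C <= l%:R * (m%:R * e) + l%:R * B * (~~ covered K C)%:R.
Proof.
elim: m C => [|m IH] C /=.
  by rewrite mul0r mulr0 add0r !mulr_ge0.
set c := l%:R * (m%:R * e).
apply: le_trans (_ : \sum_(t : candidates) tupleprob p C t * ((hits p K C t)%:R
    + (c + l%:R * B * (~~ covered K (C :|: [set t (rule C t)]))%:R)) <= _).
  apply: ler_sum => t _; apply: ler_wpM2l; first exact: tupleprob_ge0.
  by rewrite lerD2l IH.
have -> : \sum_(t : candidates) tupleprob p C t * ((hits p K C t)%:R
    + (c + l%:R * B * (~~ covered K (C :|: [set t (rule C t)]))%:R))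
    = \sum_(t : candidates) tupleprob p C t * ((hits p K C t)%:R
        + l%:R * B * (~~ covered K (C :|: [set t (rule C t)]))%:R)
      + c * \sum_(t : candidates) tupleprob p C t.
  by rewrite mulr_sumr -big_split /=; apply: eq_bigr => t _; ring.
have cS : c * \sum_(t : candidates) tupleprob p C t <= c.
  by rewrite -[leRHS]mulr1; apply: ler_wpM2l; rewrite ?sum_tupleprob_le1 ?mulr_ge0.
have := expected_round_potential C.
rewrite -natr1 /c in cS *; lra.
Qed.

End HitPotential.

Lemma le_div_add_mul_exprS {R : realFieldType} (k B : R) (l : nat) :
  0 < k -> 0 <= B -> B ^+ l.+1 = k ^+ l ->
  forall x, 0 <= x -> x <= B / k + B * x ^+ l.+1.
Proof.
move=> k_gt0 B_ge0 BkE x x_ge0.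
have Bk_ge0 : 0 <= B / k by rewrite divr_ge0 // ltW.
have Bx_ge0 : 0 <= B * x ^+ l.+1 by rewrite mulr_ge0 ?exprn_ge0.
have [|Bk_lt_x] := lerP x (B / k); first lra.
have unit : B * (B / k) ^+ l = 1.
  by rewrite exprMn exprVn mulrA -exprS BkE mulfV // expf_neq0 ?gt_eqF.
have : B * (B / k) ^+ l <= B * x ^+ l.
  by apply: ler_wpM2l => //; apply: lerXn2r; rewrite ?nnegrE // ltW.
rewrite unit => Bxl_ge1.
have : x * 1 <= x * (B * x ^+ l) by apply: ler_wpM2l.
rewrite mulr1 exprS mulrCA; lra.
Qed.

Lemma powR_one_sub_invS {R : realType} (k : R) (l : nat) :
  0 <= k -> (k `^ (1 - l.+1%:R^-1)) ^+ l.+1 = k ^+ l.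
Proof.
move=> k_ge0; rewrite -powR_mulrn ?powR_ge0 // -powRrM -powR_mulrn //.
by rewrite mulrBl mul1r mulVf ?pnatr_eq0 // -natr1 addrK.
Qed.

Theorem lemmaB2 :
  exists alpha : Rdefinitions.R,
  forall (d n : nat) (p : 'I_n -> 'rV[Rdefinitions.R]_d), injective p ->
  forall (k l : nat), (2 <= k)%N -> (1 <= l)%N ->
  forall (rule : rule_t n l)
         (c : 'I_k -> 'rV[Rdefinitions.R]_d) (a : 'I_n -> 'I_k),
  is_optimal p c -> closest_assignment p c a ->
  forall j : 'I_k,
  expected_HIT p k rule (opt_cluster a j)
    <= alpha * l%:R * (k%:R `^ (1 - l%:R^-1)).
Proof.
exists 2 => d n p _ k [//|l] k_ge2 _ rule c a _ _ j.
set B := k%:R `^ _.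
have k_gt0 : (0 : Rdefinitions.R) < k%:R by rewrite ltr0n (leq_trans _ k_ge2).
have B_ge0 : 0 <= B by apply: powR_ge0.
have Bk_ge0 : 0 <= B / k%:R by rewrite divr_ge0 // ltW.
have bound := le_div_add_mul_exprS k_gt0 B_ge0 (powR_one_sub_invS l (ltW k_gt0)).
rewrite /expected_HIT.
apply: le_trans
  (EHIT_le_potential p rule (opt_cluster a j) Bk_ge0 B_ge0 bound k finset.set0) _.
have -> : covered (opt_cluster a j) finset.set0 = false.
  by rewrite /covered finset.setI0 eqxx.
rewrite mulr1 [k%:R * _]mulrC divfK ?gt_eqF //.
lra.
Qed.
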